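(* In the polytope-code decoding setting described in the context, for every vertex $v_i \in V^*$ we have $\bar y_i = y_i$.
   Context: Let $T\ge 1$, $N > T$, $N_0\ge1$ be integers. An eligible $(N,N-T)$-generator matrix is an $N\times(N-T)$ matrix $A=(A_{ij})$ with nonnegative integer entries whose first $N-T$ rows form the identity matrix and such that every $(N-T)\times(N-T)$ submatrix obtained by choosing $N-T$ rows is nonsingular. Given $x_1,\dots,x_{N-T}\in\mathbb{Z}^{N_0}$, the transmitted codewords are $y_i = \sum_{j=1}^{N-T} A_{ij} x_j \in \mathbb{Z}^{N_0}$, $i\in[N]$. The decoder receives $\bar y_1,\dots,\bar y_N\in\mathbb{Z}^{N_0}$, where $\bar y_i = y_i$ for all $i$ outside some unknown set of at most $T$ indices, and it knows exactly the values $F_{ij} = \langle y_i,y_j\rangle$ for all $i,j\in[N]$. The syndrome graph $G$ has vertices $v_1,\dots,v_N$; for $i\ne j$ there is an edge between $v_i$ and $v_j$ iff $\langle \bar y_i,\bar y_j\rangle = F_{ij}$, and there is a self-loop at $v_i$ iff $\langle \bar y_i,\bar y_i\rangle = F_{ii}$. Let $\hat G$ be obtained from $G$ by deleting every vertex without a self-loop (and its incident edges). Let $V'$ be the set of vertices of $\hat G$ that belong to some clique (set of pairwise adjacent distinct vertices) of size at least $N-T$ in $\hat G$. Let $V^*$ be the set of $v_i\in V'$ such that $v_i$ is adjacent in $\hat G$ to every $v_j \in V'$ (adjacency of $v_i$ to itself being given by its self-loop). *)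

From HB Require Import structures.
From mathcomp Require Import all_boot all_order all_algebra.
Set Implicit Arguments. Unset Strict Implicit. Unset Printing Implicit Defensive.
Import Order.TTheory GRing.Theory Num.Theory.
Local Open Scope ring_scope.

Definition dotv (n : nat) (u v : 'rV[int]_n) : int :=
  \sum_(k < n) u ord0 k * v ord0 k.

Definition eligible_gen (N T : nat) (A : 'M[int]_(N, N - T)) : Prop :=
  [/\ (forall i j, 0 <= A i j),
      (forall (i : 'I_N) (j : 'I_(N - T)), (i < N - T)%N ->
          A i j = (nat_of_ord i == nat_of_ord j)%:R)
    & (forall f : 'I_(N - T) -> 'I_N, injective f -> \det (rowsub f A) != 0)].

Definition codeword (N T N0 : nat) (A : 'M[int]_(N, N - T))
    (x : 'I_(N - T) -> 'rV[int]_N0) (i : 'I_N) : 'rV[int]_N0 :=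
  \sum_(j < N - T) A i j *: x j.

(* Syndrome graph: for i <> j edge iff <yb_i,yb_j> = F_ij = <y_i,y_j>;
   for i = j this is exactly the self-loop condition. *)
Definition syn_adj (N N0 : nat) (y yb : 'I_N -> 'rV[int]_N0) (i j : 'I_N) : bool :=
  dotv (yb i) (yb j) == dotv (y i) (y j).

Definition hatV (N N0 : nat) (y yb : 'I_N -> 'rV[int]_N0) : {set 'I_N} :=
  [set i | syn_adj y yb i i].

Definition is_clique (N N0 : nat) (y yb : 'I_N -> 'rV[int]_N0) (C : {set 'I_N}) : bool :=
  (C \subset hatV y yb) &&
  [forall u in C, forall w in C, (u != w) ==> syn_adj y yb u w].

Definition Vprime (N N0 K : nat) (y yb : 'I_N -> 'rV[int]_N0) : {set 'I_N} :=
  [set v | [exists C : {set 'I_N}, [&& v \in C, (K <= #|C|)%N & is_clique y yb C]]].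

Definition Vstar (N N0 K : nat) (y yb : 'I_N -> 'rV[int]_N0) : {set 'I_N} :=
  [set v in Vprime K y yb | [forall w in Vprime K y yb, syn_adj y yb v w]].

From HB Require Import structures.
From mathcomp Require Import all_boot all_order all_algebra.
From mathcomp Require Import zify.
Set Implicit Arguments. Unset Strict Implicit. Unset Printing Implicit Defensive.
Import Order.TTheory GRing.Theory Num.Theory.
Local Open Scope ring_scope.

(* The correct symbols (all but at most T) form a clique of size >= N - T, so
   they lie in V'; a vertex i of V^* is therefore adjacent to all of them, which
   says that the error e = yb_i - y_i is orthogonal to N - T codewords.  Any
   N - T rows of the generator matrix are invertible, so e is orthogonal to
   every message vector x_j, hence to y_i; the self-loop at i then reads
   <y_i, y_i> + <e, e> = <y_i, y_i>, which forces e = 0. *)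

Lemma dotvC n (u v : 'rV[int]_n) : dotv u v = dotv v u.
Proof. by apply: eq_bigr => k _; rewrite mulrC. Qed.

Lemma dotvDl n (u v w : 'rV[int]_n) : dotv (u + v) w = dotv u w + dotv v w.
Proof. by rewrite /dotv -big_split; apply: eq_bigr => k _; rewrite mxE mulrDl. Qed.

Lemma dotvBl n (u v w : 'rV[int]_n) : dotv (u - v) w = dotv u w - dotv v w.
Proof.
rewrite dotvDl; congr (_ + _).
by rewrite /dotv -sumrN; apply: eq_bigr => k _; rewrite mxE mulNr.
Qed.

Lemma dotv_sumZr n m (u : 'rV[int]_n) (a : 'I_m -> int) (v : 'I_m -> 'rV[int]_n) :
  dotv u (\sum_(j < m) a j *: v j) = \sum_(j < m) a j * dotv u (v j).
Proof.
rewrite /dotv; under eq_bigr => k _ do rewrite summxE big_distrr /=.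
rewrite exchange_big; apply: eq_bigr => j _; rewrite big_distrr.
by apply: eq_bigr => k _; rewrite mxE mulrCA.
Qed.

Lemma dotvv_eq0 n (u : 'rV[int]_n) : dotv u u = 0 -> u = 0.
Proof.
move/eqP; rewrite psumr_eq0 => [/allP uu0|k _]; last by rewrite -expr2 sqr_ge0.
apply/rowP => k; have /= := uu0 k (mem_index_enum k).
by rewrite mulf_eq0 orbb mxE => /eqP.
Qed.

Lemma dotv_pythagoras n (u v : 'rV[int]_n) : dotv u v = 0 ->
  dotv (u + v) (u + v) = dotv u u + dotv v v.
Proof.
move=> uv0; rewrite dotvDl (dotvC u) (dotvC v) !dotvDl (dotvC v u) uv0.
by rewrite addr0 add0r.
Qed.

Lemma mulmx_det_neq0_eq0 (R : idomainType) n m (B : 'M[R]_n) (c : 'M[R]_(n, m)) :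
  \det B != 0 -> B *m c = 0 -> c = 0.
Proof.
move=> detB Bc0; have := congr1 (mulmx (\adj B)) Bc0.
rewrite mulmxA mul_adj_mx mulmx0 mul_scalar_mx => /matrixP dc0.
apply/matrixP => i j; have /eqP := dc0 i j.
by rewrite !mxE mulf_eq0 (negbTE detB) => /eqP.
Qed.

Lemma exists_inj_ord_in {I : finType} {C : {set I}} {K : nat} : (K <= #|C|)%N ->
  exists f : 'I_K -> I, injective f /\ forall k, f k \in C.
Proof.
move=> KC; exists (fun k => enum_val (A := mem C) (widen_ord KC k)); split.
  by move=> k1 k2 /enum_val_inj /(congr1 val) /= /val_inj.
by move=> k; apply: (enum_valP (A := mem C)).
Qed.

Section Codewords.

Variables (N T N0 : nat) (A : 'M[int]_(N, N - T)) (x : 'I_(N - T) -> 'rV[int]_N0).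

Lemma dotv_codeword (u : 'rV[int]_N0) i :
  dotv u (codeword A x i) = \sum_(j < N - T) A i j * dotv u (x j).
Proof. exact: dotv_sumZr. Qed.

Lemma dotv_codeword_eq0 (f : 'I_(N - T) -> 'I_N) (u : 'rV[int]_N0) :
  \det (rowsub f A) != 0 ->
  (forall k, dotv u (codeword A x (f k)) = 0) ->
  forall i, dotv u (codeword A x i) = 0.
Proof.
move=> detAf uyf0 i; pose c := \col_j dotv u (x j).
have c0 : c = 0.
  apply: mulmx_det_neq0_eq0 detAf _; apply/colP => k.
  rewrite !mxE -[RHS](uyf0 k) dotv_codeword.
  by apply: eq_bigr => j _; rewrite !mxE.
rewrite dotv_codeword big1 // => j _.
by have /colP/(_ j) := c0; rewrite !mxE => ->; rewrite mulr0.
Qed.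

End Codewords.

Section SyndromeGraph.

Variables (N N0 : nat) (y yb : 'I_N -> 'rV[int]_N0).

Lemma is_clique_correct (C : {set 'I_N}) :
  (forall i, i \in C -> yb i = y i) -> is_clique y yb C.
Proof.
move=> ok; apply/andP; split.
  by apply/subsetP => i iC; rewrite inE /syn_adj ok.
apply/forallP => u; apply/implyP => uC; apply/forallP => w; apply/implyP => wC.
by apply/implyP => _; rewrite /syn_adj !ok.
Qed.

Lemma correct_sub_Vprime K (C : {set 'I_N}) : (K <= #|C|)%N ->
  (forall i, i \in C -> yb i = y i) -> C \subset Vprime K y yb.
Proof.
move=> KC ok; apply/subsetP => i iC; rewrite inE; apply/existsP; exists C.
by rewrite iC KC is_clique_correct.
Qed.

Lemma Vstar_adj K i w : i \in Vstar K y yb -> w \in Vprime K y yb ->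
  syn_adj y yb i w.
Proof. by rewrite inE => /andP[_ /forall_inP]; apply. Qed.

Lemma Vstar_selfloop K i : i \in Vstar K y yb -> syn_adj y yb i i.
Proof. by move=> iVs; apply: Vstar_adj (iVs) _; move: iVs; rewrite inE => /andP[]. Qed.

Lemma selfloop_orth_correct i : syn_adj y yb i i ->
  dotv (yb i - y i) (y i) = 0 -> yb i = y i.
Proof.
move=> /eqP loop /eqP; rewrite dotvC => orth; apply/eqP; rewrite -subr_eq0.
apply/eqP/dotvv_eq0/(addrI (dotv (y i) (y i))).
by rewrite addr0 -dotv_pythagoras ?(eqP orth) // addrC subrK.
Qed.

End SyndromeGraph.

Theorem mainTheorem5 (T N N0 : nat) (hT : (1 <= T)%N) (hN : (T < N)%N)
    (hN0 : (1 <= N0)%N)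
    (A : 'M[int]_(N, N - T)) (hA : eligible_gen A)
    (x : 'I_(N - T) -> 'rV[int]_N0) (yb : 'I_N -> 'rV[int]_N0)
    (herr : exists S : {set 'I_N}, (#|S| <= T)%N /\
              (forall i, i \notin S -> yb i = codeword A x i)) :
  forall i, i \in Vstar (N - T) (codeword A x) yb -> yb i = codeword A x i.
Proof.
move=> i iVs; set y := codeword A x.
have [S [cardS okS]] := herr.
have okC : forall w, w \in ~: S -> yb w = y w by move=> w; rewrite inE; apply: okS.
have cardC : (N - T <= #|~: S|)%N.
  by move: (cardsC S); rewrite card_ord; lia.
have [f [f_inj fC]] := exists_inj_ord_in cardC.
have [_ _ /(_ f f_inj) detAf] := hA.
apply: selfloop_orth_correct; first exact: Vstar_selfloop iVs.
apply: (dotv_codeword_eq0 detAf) => k.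
have := Vstar_adj iVs (subsetP (correct_sub_Vprime cardC okC) _ (fC k)).
by rewrite /syn_adj (okC _ (fC k)) dotvBl => /eqP ->; rewrite subrr.
Qed.
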